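(* Let $n\ge 3$ be an integer and $D_{2n}=\langle a,x\mid a^n=e,\ x^2=e,\ xax=a^{-1}\rangle$. For $m\mid n$ let $A_m=\langle a^{n/m}\rangle\simeq\mathbb{Z}_m$, and for $m\mid n$ and $r\in\mathbb{Z}_{n/m}$ (identified with an integer in $\{0,\dots,\tfrac nm-1\}$) let $B_{2m,r}=\langle a^{n/m},a^rx\rangle\simeq D_{2m}$. Then: (1) If $m\mid n$ and $\gcd(m,\tfrac nm)=1$, then $D_{2n}$ is the internal semidirect product $D_{2n}=A_m\rtimes B_{2n/m,r}$ for every $r\in\mathbb{Z}_m$. (2) If $n$ is even, then $D_{2n}=B_{n,0}\rtimes B_{2,r_1}=B_{n,1}\rtimes B_{2,r_0}$ for all $r_0,r_1\in\mathbb{Z}_n$ with $r_i\equiv i\pmod 2$. (3) If $2\mid n$ and $4\nmid n$, then $D_{2n}=B_{n,0}\times A_2$ and $D_{2n}=B_{n,1}\times A_2$ (internal direct products). (4) There are no other internal semidirect decompositions $D_{2n}=X\rtimes Y$ (with $X,Y$ nontrivial subgroups) than those listed in (1)–(3).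
   Context: A group $G$ is the internal semidirect product $X\rtimes Y$ of subgroups $X,Y$ if $X$ is normal in $G$, $G=XY$ and $X\cap Y=\{e\}$; an internal direct product is the case where both are normal. Powers $a^r$ with $r$ a residue mean $a$ raised to the least nonnegative representative of $r$. *)

From mathcomp Require Import all_boot all_fingroup.
Set Implicit Arguments. Unset Strict Implicit. Unset Printing Implicit Defensive.
Local Open Scope group_scope.

Definition is_dihedral_pres (gT : finGroupType) (n : nat) (G : {set gT}) (a x : gT) :=
  [/\ G = <<[set a; x]>>, a ^+ n = 1, x ^+ 2 = 1, x * a * x = a^-1
    & #|G| = (2 * n)%N].

Definition Agrp (gT : finGroupType) (n : nat) (a : gT) (m : nat) : {group gT} :=
  <[a ^+ (n %/ m)]>%G.

Definition Bgrp (gT : finGroupType) (n : nat) (a x : gT) (m r : nat) : {group gT} :=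
  <<[set a ^+ (n %/ m); (a ^+ r * x)%g]>>%G.

(* Outside the rotation subgroup <[a]>, which has index 2, every element of
   D_2n is a reflection a^i x of order 2.  Hence a subgroup H containing a
   reflection a^r x has order 2 #|H :&: <[a]>| and is determined by its
   rotation part <[a^k]> together with a^(r mod k) x: it is some B_{2m,r}.
   In a decomposition X ><| Y = D_2n either the normal factor X consists of
   rotations, so X = A_m, Y meets <[a]> in <[a^m]> and X :&: Y = 1 forces
   gcd(m, n/m) = 1; or X contains a reflection, hence also its commutator
   a^2 with a but not a itself (otherwise X = G), so X = B_{n,r mod 2} has
   index 2 and n is even.  Its complement then has order 2 and is generated
   either by a reflection of the other parity or by the central involution
   a^(n/2), which lies outside X exactly when 4 does not divide n. *)
From mathcomp Require Import all_boot all_fingroup all_solvable zify.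
Set Implicit Arguments. Unset Strict Implicit. Unset Printing Implicit Defensive.
Local Open Scope group_scope.

Lemma divn_divr m n : 0 < n -> m %| n -> n %/ (n %/ m) = m.
Proof. by move=> n_gt0 m_dv; rewrite divnA // mulKn. Qed.

Section GroupFacts.

Variable gT : finGroupType.
Implicit Types (a : gT) (G H K C : {group gT}).

Lemma sdprod_by_card G K H :
    K \subset G -> H \subset G -> H \subset 'N(K) -> K :&: H = 1 ->
  #|G| <= #|K| * #|H| -> K ><| H = G.
Proof.
move=> sKG sHG nKH tiKH leG; rewrite sdprodE //; apply/eqP.
by rewrite eqEcard mul_subG // TI_cardMg.
Qed.

Lemma card_index2I G C H :
  #|G : C| = 2 -> H \subset G -> ~~ (H \subset C) -> #|H| = (2 * #|H :&: C|)%N.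
Proof.
move=> iGC sHG nsHC.
have le2 : #|H : C| <= 2 by rewrite -iGC subset_leq_card // imsetS.
have gt1 : 1 < #|H : C| by rewrite indexg_gt1.
by rewrite -(Lagrange (subsetIl H C)) indexgI mulnC; congr (_ * _)%N; lia.
Qed.

Lemma sub_cycle_eq a H : H \subset <[a]> -> H :=: <[a ^+ (#[a] %/ #|H|)]>.
Proof.
move=> sHa; have /setP/(_ H) := cycle_sub_group (cardSg sHa).
by rewrite !inE sHa eqxx => /esym/eqP {1}->.
Qed.

Lemma mem_cycleX a i k : k %| #[a] -> (a ^+ i \in <[a ^+ k]>) = (k %| i).
Proof.
move=> k_dv; apply/idP/idP => [/cycleP [j /eqP] | /dvdnP [j ->]]; last first.
  by rewrite mulnC expgM mem_cycle.
rewrite -expgM eq_expg_mod_order => /eqP /(congr1 (modn^~ k)) /=.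
by rewrite !modn_dvdm // modnMr /dvdn => ->.
Qed.

Lemma sub_cycle_sqr a H :
  H \subset <[a]> -> a ^+ 2 \in H -> a \notin H -> H :=: <[a ^+ 2]>.
Proof.
move=> sHa a2H aNH; apply/eqP; rewrite eq_sym eqEsubset cycle_subG a2H /=.
apply/subsetP => y yH; have /cycleP [i def_y] := subsetP sHa y yH.
have def_y2 : y = (a ^+ 2) ^+ (i %/ 2) * a ^+ odd i.
  by rewrite def_y -expgM -expgD mulnC -modn2 -divn_eq.
move: yH; rewrite def_y2 groupMl ?(groupX _ a2H) //.
case: (odd i) => [aH | _]; last by rewrite mulg1 mem_cycle.
by case/negP: aNH.
Qed.

Lemma cycleX_TI_coprime a m : m %| #[a] ->
  (<[a ^+ (#[a] %/ m)]> :&: <[a ^+ m]> :==: 1) = coprime m (#[a] %/ m).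
Proof.
move=> m_dv; have a_gt0 := order_gt0 a.
have oX : #[a ^+ (#[a] %/ m)] = m by rewrite orderXdiv ?dvdn_div ?divn_divr.
have oY : #[a ^+ m] = #[a] %/ m by rewrite orderXdiv.
apply/idP/idP => [/eqP tiXY | cop]; last first.
  by rewrite coprime_TIg // -!orderE oX oY.
set g := gcdn m (#[a] %/ m).
have g_dv : g %| #[a] := dvdn_trans (dvdn_gcdl _ _) m_dv.
(* The element of order g in <[a]> lies in both cyclic subgroups. *)
have : a ^+ (#[a] %/ g) \in <[a ^+ (#[a] %/ m)]> :&: <[a ^+ m]>.
  rewrite inE !mem_cycleX ?dvdn_div // !dvdn_divRL //.
  rewrite -{2 3}(divnK m_dv) dvdn_mul ?dvdn_gcdl //= mulnC.
  by rewrite dvdn_mul ?dvdn_gcdr.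
by rewrite tiXY inE -order_eq1 orderXdiv ?dvdn_div // divn_divr.
Qed.

End GroupFacts.

Section Dihedral.

Variables (gT : finGroupType) (n : nat) (G : {group gT}) (a x : gT).
Hypotheses (n_gt0 : 0 < n) (dihG : is_dihedral_pres n G a x).

Let genG : G :=: <<[set a; x]>>. Proof. by case: dihG. Qed.
Let expa_n : a ^+ n = 1. Proof. by case: dihG. Qed.
Let sqrx : x ^+ 2 = 1. Proof. by case: dihG. Qed.
Let xax : x * a * x = a^-1. Proof. by case: dihG. Qed.
Let cardG : #|G| = (2 * n)%N. Proof. by case: dihG. Qed.

Lemma invx : x^-1 = x.
Proof. by apply/eqP; rewrite eq_invg_mul -expg2 sqrx. Qed.

Lemma conjx_expa i : (a ^+ i) ^ x = a ^- i.
Proof. by rewrite conjXg conjgE invx mulgA xax expVgn. Qed.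

Lemma conj_refl_expa r i : (a ^+ i) ^ (a ^+ r * x) = a ^- i.
Proof.
have fix_ar : (a ^+ i) ^ (a ^+ r) = a ^+ i.
  by rewrite conjgE (commuteX2 i r (commute_refl a)) mulKg.
by rewrite conjgM fix_ar conjx_expa.
Qed.

Lemma comm_refl_a r : [~ a ^+ r * x, a] = a ^+ 2.
Proof.
by rewrite commgEr conjVg (conj_refl_expa r 1) !expg1 invgK expg2.
Qed.

Lemma mem_a : a \in G. Proof. by rewrite genG mem_gen // !inE eqxx. Qed.
Lemma mem_x : x \in G. Proof. by rewrite genG mem_gen // !inE eqxx orbT. Qed.
Lemma mem_expa i : a ^+ i \in G. Proof. exact: groupX mem_a. Qed.
Lemma mem_refl r : a ^+ r * x \in G.
Proof. by rewrite groupM ?mem_expa ?mem_x. Qed.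

Lemma norm_cycle_expa k : G \subset 'N(<[a ^+ k]>).
Proof.
rewrite genG gen_subG subUset !sub1set -!cycle_subG !norms_cycle conjx_expa.
by rewrite conjgE -(commuteX k (commute_refl a)) mulKg cycle_id groupV cycle_id.
Qed.

Lemma dihedral_mul : G :=: <[a]> * <[x]>.
Proof.
rewrite -norm_joinEr ?genG ?joing_idl ?joing_idr //.
by rewrite cycle_subG (subsetP (norm_cycle_expa 1)) ?mem_x.
Qed.

Lemma dihedral_orders : [/\ #[a] = n, #[x] = 2 & <[a]> :&: <[x]> = 1].
Proof.
have le_a : #[a] <= n by rewrite dvdn_leq // order_dvdn expa_n.
have le_x : #[x] <= 2 by rewrite dvdn_leq // order_dvdn sqrx.
have := mul_cardG <[a]> <[x]>; rewrite -dihedral_mul cardG -!orderE.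
have : 0 < #|<[a]> :&: <[x]>| by apply/card_gt0P; exists 1; rewrite group1.
set t := #|_ :&: _| => t_gt0 cardE; have ? := order_gt0 x.
have t1 : t = 1%N by nia.
by split; [nia | nia | apply/eqP; rewrite trivg_card1 -/t t1].
Qed.

Lemma order_a : #[a] = n. Proof. by case: dihedral_orders. Qed.

Lemma x_notin_cycle : x \notin <[a]>.
Proof.
have [_ ox tiax] := dihedral_orders; apply/negP => xa.
have : x \in <[a]> :&: <[x]> by rewrite inE xa cycle_id.
by rewrite tiax inE -order_eq1 ox.
Qed.

Lemma refl_notin_cycle r : a ^+ r * x \notin <[a]>.
Proof. by rewrite groupMl ?mem_cycle // x_notin_cycle. Qed.

Lemma order_refl r : #[a ^+ r * x] = 2.
Proof.
apply/prime_nt_dvdP => //.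
  by rewrite order_eq1; apply: contraNneq (refl_notin_cycle r) => ->.
by rewrite order_dvdn expg2 -mulgA -{1}invx -conjgE conjx_expa mulgV.
Qed.

Lemma index_cycle_a : #|G : <[a]>| = 2.
Proof.
have sAG : <[a]> \subset G by rewrite cycle_subG mem_a.
move: (Lagrange sAG); rewrite cardG -orderE order_a mulnC.
by move/eqP; rewrite eqn_pmul2r // => /eqP.
Qed.

Lemma refl_of_notin_cycle g :
  g \in G -> g \notin <[a]> -> exists2 i, i < n & g = a ^+ i * x.
Proof.
have [_ ox _] := dihedral_orders.
rewrite dihedral_mul => /mulsgP [_ e /cycleP [i ->]].
rewrite (cycle2g ox) !inE => /orP [] /eqP -> ->.
  by rewrite mulg1 mem_cycle.
by exists (i %% n); rewrite ?ltn_pmod // -order_a expg_mod_order.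
Qed.

Lemma mem_refl_modn (H : {group gT}) k i :
  a ^+ k \in H -> (a ^+ i * x \in H) = (a ^+ (i %% k) * x \in H).
Proof.
move=> akH; rewrite {1}(divn_eq i k) expgD mulnC expgM -mulgA groupMl //.
exact: groupX.
Qed.

Lemma cycle_refl_TI r (K : {group gT}) :
  K \subset <[a]> -> <[a ^+ r * x]> :&: K = 1.
Proof.
move=> sKa; apply: prime_TIg; first by rewrite -orderE order_refl.
by rewrite cycle_subG; apply: contra (refl_notin_cycle r) => /(subsetP sKa).
Qed.

Lemma Bgrp_sub j r : Bgrp n a x j r \subset G.
Proof. by rewrite gen_subG subUset !sub1set mem_expa mem_refl. Qed.

Lemma BgrpE j r : Bgrp n a x j r :=: <[a ^+ (n %/ j)]> * <[a ^+ r * x]>.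
Proof.
rewrite -norm_joinEr ?joing_idl ?joing_idr //.
by rewrite cycle_subG (subsetP (norm_cycle_expa _)) ?mem_refl.
Qed.

Lemma Bgrp1E r : Bgrp n a x 1 r :=: <[a ^+ r * x]>.
Proof. by rewrite BgrpE divn1 expa_n cycle1 mul1g. Qed.

Lemma Bgrp_cycleI j r : Bgrp n a x j r :&: <[a]> = <[a ^+ (n %/ j)]>.
Proof.
by rewrite BgrpE -group_modl ?cycleX // cycle_refl_TI ?subxx // mulg1.
Qed.

Lemma card_Bgrp j r : j %| n -> #|Bgrp n a x j r| = (2 * j)%N.
Proof.
move=> j_dv; rewrite BgrpE TI_cardMg; last first.
  by rewrite setIC cycle_refl_TI ?cycleX.
rewrite -!orderE order_refl orderXdiv order_a ?dvdn_div //.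
by rewrite divn_divr // mulnC.
Qed.

Lemma mem_Bgrp_refl j s i : j %| n ->
  (a ^+ i * x \in Bgrp n a x j s) = (i %% (n %/ j) == s %% (n %/ j)).
Proof.
move=> j_dv; set k := n %/ j; have k_dv : k %| n := dvdn_div j_dv.
have akB : a ^+ k \in Bgrp n a x j s by rewrite mem_gen // !inE eqxx.
apply/idP/eqP => [| eq_ik]; last first.
  rewrite (mem_refl_modn _ akB) eq_ik -(mem_refl_modn _ akB).
  by rewrite mem_gen // !inE eqxx orbT.
rewrite BgrpE => /mulsgP [_ e /cycleP [t ->]].
rewrite (cycle2g (order_refl s)) !inE => /orP [] /eqP -> def_refl.
  case/negP: (refl_notin_cycle i).
  by rewrite def_refl mulg1 -expgM mem_cycle.
move: def_refl; rewrite mulgA => /mulIg /eqP.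
rewrite -expgM -expgD eq_expg_mod_order order_a => /eqP /(congr1 (modn^~ k)).
by rewrite /= !modn_dvdm // -/k mulnC modnMDl.
Qed.

Lemma Bgrp_eq (H : {group gT}) j r :
    j %| n -> H \subset G -> a ^+ r * x \in H ->
  H :&: <[a]> = <[a ^+ (n %/ j)]> -> H :=: Bgrp n a x j r.
Proof.
move=> j_dv sHG yH HIa; apply/eqP; rewrite eq_sym eqEcard.
have akH : a ^+ (n %/ j) \in H.
  by move: (cycle_id (a ^+ (n %/ j))); rewrite -HIa inE => /andP [].
rewrite gen_subG subUset !sub1set yH akH /=.
have nsHa : ~~ (H \subset <[a]>).
  by apply: contra (refl_notin_cycle r) => /subsetP; apply.
rewrite card_Bgrp // (card_index2I index_cycle_a sHG nsHa) HIa -orderE.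
by rewrite orderXdiv order_a ?dvdn_div // divn_divr.
Qed.

Lemma sdprod_Agrp_Bgrp m r : m %| n -> coprime m (n %/ m) ->
  Agrp n a m ><| Bgrp n a x (n %/ m) r = G.
Proof.
move=> m_dv cop; have m_gt0 : 0 < m := dvdn_gt0 n_gt0 m_dv.
have card_A : #|Agrp n a m| = m.
  by rewrite -orderE orderXdiv order_a ?dvdn_div // divn_divr.
have tiAB : Agrp n a m :&: Bgrp n a x (n %/ m) r = 1.
  rewrite /= -(setIidPl (cycleX a (n %/ m))) -setIA (setIC <[a]>).
  rewrite Bgrp_cycleI divn_divr //; apply/eqP.
  by have := @cycleX_TI_coprime _ a m; rewrite order_a cop => ->.
apply: sdprod_by_card; rewrite ?cycle_subG ?mem_expa ?Bgrp_sub //.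
  exact: subset_trans (Bgrp_sub _ _) (norm_cycle_expa _).
by rewrite cardG card_A card_Bgrp ?dvdn_div // mulnCA muln_divA // mulKn.
Qed.

Lemma card_Bgrp_half s : ~~ odd n -> #|Bgrp n a x (n %/ 2) s| = n.
Proof.
move=> n_even; have two_dv : 2 %| n by rewrite dvdn2.
by rewrite card_Bgrp ?dvdn_div // mulnC divnK.
Qed.

Lemma Bgrp_half_normal s : ~~ odd n -> Bgrp n a x (n %/ 2) s <| G.
Proof.
move=> n_even; apply: index2_normal (Bgrp_sub _ _) _.
move: (Lagrange (Bgrp_sub (n %/ 2) s)); rewrite card_Bgrp_half // cardG mulnC.
by move/eqP; rewrite eqn_pmul2r // => /eqP.
Qed.

Lemma sdprod_Bgrp_refl (s : bool) r : ~~ odd n -> odd r != s ->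
  Bgrp n a x (n %/ 2) s ><| Bgrp n a x 1 r = G.
Proof.
move=> n_even rs; have two_dv : 2 %| n by rewrite dvdn2.
apply: sdprod_by_card; rewrite ?Bgrp_sub //.
- exact: subset_trans (Bgrp_sub _ _) (normal_norm (Bgrp_half_normal _ _)).
- rewrite setIC Bgrp1E prime_TIg -?orderE ?order_refl //.
  rewrite cycle_subG mem_Bgrp_refl ?dvdn_div ?divn_divr // !modn2 oddb.
  by case: (odd r) s rs => [] [].
by rewrite cardG card_Bgrp_half // Bgrp1E -orderE order_refl mulnC.
Qed.

Lemma cent_half_turn : 2 %| n -> G \subset 'C[a ^+ (n %/ 2)].
Proof.
move=> two_dv; set z := a ^+ (n %/ 2).
have invz : z^-1 = z.
  apply/eqP; rewrite eq_invg_mul /z -expgD addnn -mul2n mulnC divnK //.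
  by rewrite expa_n.
rewrite genG gen_subG subUset !sub1set; apply/andP; split; apply/cent1P.
  exact: commuteX.
by apply/commute_sym/commgP/conjg_fixP; rewrite conjx_expa invz.
Qed.

Lemma dprod_Bgrp_Agrp s : 2 %| n -> ~~ (4 %| n) ->
  Bgrp n a x (n %/ 2) s \x Agrp n a 2 = G.
Proof.
move=> two_dv n4; have n_even : ~~ odd n by rewrite -dvdn2.
have cBA : Agrp n a 2 \subset 'C(Bgrp n a x (n %/ 2) s).
  rewrite cycle_subG -sub_cent1.
  exact: subset_trans (Bgrp_sub _ _) (cent_half_turn _).
have card_A : #|Agrp n a 2| = 2.
  by rewrite -orderE orderXdiv order_a ?dvdn_div // divn_divr.
rewrite dprodEsd //; apply: sdprod_by_card; rewrite ?Bgrp_sub ?cents_norm //.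
- by rewrite cycle_subG mem_expa.
- rewrite setIC prime_TIg ?card_A // cycle_subG; apply: contra n4 => zB.
  have : a ^+ (n %/ 2) \in Bgrp n a x (n %/ 2) s :&: <[a]>.
    by rewrite inE zB mem_cycle.
  by rewrite Bgrp_cycleI divn_divr // mem_cycleX ?order_a // dvdn_divRL.
by rewrite cardG card_Bgrp_half // card_A mulnC.
Qed.

Lemma sdprod_cycle_kernel (X Y : {group gT}) :
    X ><| Y = G -> X \subset <[a]> ->
  exists m r, [/\ m %| n, coprime m (n %/ m), r < m,
                 X :=: Agrp n a m & Y :=: Bgrp n a x (n %/ m) r].
Proof.
move=> defG sXa; have [_ sYG mulXY _ tiXY] := sdprod_context defG.
set m := #|X|; have m_dv : m %| n by rewrite -order_a cardSg.
have m_gt0 : 0 < m := cardG_gt0 X.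
have defX : X :=: <[a ^+ (n %/ m)]> by rewrite (sub_cycle_eq sXa) order_a.
have nsYa : ~~ (Y \subset <[a]>).
  apply/negP => sYa; have := subset_leq_card (mul_subG sXa sYa).
  by rewrite mulXY cardG -orderE order_a; lia.
have [y yY yNa] := subsetPn nsYa.
have [r _ def_y] := refl_of_notin_cycle (subsetP sYG y yY) yNa.
rewrite def_y in yY.
have YIa : Y :&: <[a]> = <[a ^+ m]>.
  have := sdprod_card defG; rewrite (card_index2I index_cycle_a sYG nsYa).
  rewrite cardG -/m -{1}(divnK m_dv) => /eqP.
  rewrite mulnCA eqn_pmul2l // mulnC eqn_pmul2r // => /eqP cardYa.
  by rewrite (sub_cycle_eq (subsetIr Y _)) order_a /= cardYa divn_divr.
have amY : a ^+ m \in Y.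
  by move: (cycle_id (a ^+ m)); rewrite -YIa inE => /andP [].
exists m, (r %% m); split; rewrite ?ltn_pmod //.
  rewrite -order_a -cycleX_TI_coprime ?order_a // -defX.
  by apply/eqP/trivgP; rewrite -tiXY setIS // cycle_subG.
by apply: Bgrp_eq; rewrite ?dvdn_div ?divn_divr // -(mem_refl_modn _ amY).
Qed.

Lemma sdprod_refl_kernel (X Y : {group gT}) :
    X ><| Y = G -> Y :!=: 1 -> ~~ (X \subset <[a]>) ->
  ~~ odd n /\ exists s : bool, X :=: Bgrp n a x (n %/ 2) s.
Proof.
move=> defG ntY nsXa; have [nXG sYG _ _ tiXY] := sdprod_context defG.
have [y yX yNa] := subsetPn nsXa.
have [r _ def_y] := refl_of_notin_cycle (subsetP (normal_sub nXG) y yX) yNa.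
rewrite def_y in yX.
have a2X : a ^+ 2 \in X.
  have sXGX : [~: X, G] \subset X by rewrite commg_subl normal_norm.
  by rewrite -(comm_refl_a r) (subsetP sXGX) ?mem_commg ?mem_a.
have aNX : a \notin X.
  apply: contra ntY => aX.
  have xX : x \in X by rewrite -(groupMl _ (groupX r aX)).
  have sGX : G \subset X by rewrite genG gen_subG subUset !sub1set aX.
  by rewrite -(setIidPr (subset_trans sYG sGX)) tiXY.
have XIa : X :&: <[a]> = <[a ^+ 2]>.
  apply: sub_cycle_sqr; rewrite ?subsetIr // inE ?a2X ?mem_cycle //.
  by rewrite negb_and aNX.
have n_even : ~~ odd n.
  apply: contra aNX => n_odd; have := generator_coprime a 2.
  rewrite order_a coprimen2 n_odd => /eqP gen_a2.
  by move: (cycle_id a); rewrite gen_a2 -XIa inE => /andP [].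
have two_dv : 2 %| n by rewrite dvdn2.
split=> //; exists (odd r); apply: Bgrp_eq; rewrite ?dvdn_div ?normal_sub //.
  by rewrite -modn2 -(mem_refl_modn _ a2X).
by rewrite divn_divr.
Qed.

Lemma sdprod_Bgrp_half_complement (s : bool) (Y : {group gT}) :
    ~~ odd n -> Bgrp n a x (n %/ 2) s ><| Y = G ->
  ~~ (4 %| n) /\ Y :=: Agrp n a 2
  \/ exists i, [/\ i < n, odd i = ~~ s & Y :=: Bgrp n a x 1 i].
Proof.
move=> n_even defG; have [_ sYG _ _ tiBY] := sdprod_context defG.
have two_dv : 2 %| n by rewrite dvdn2.
have cardY : #|Y| = 2.
  have := sdprod_card defG; rewrite card_Bgrp_half // cardG mulnC => /eqP.
  by rewrite eqn_pmul2r // => /eqP.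
have ntY : Y :!=: 1 by rewrite trivg_card1 cardY.
have [y yY nty] := trivgPn _ ntY.
have defY : Y :=: <[y]>.
  apply/eqP; rewrite eq_sym eqEcard cycle_subG yY cardY -orderE.
  by have := order_gt0 y; rewrite -order_eq1 in nty; lia.
case: (boolP (y \in <[a]>)) => [ya | yNa].
  have sYa : Y \subset <[a]> by rewrite defY cycle_subG.
  have defYA : Y :=: Agrp n a 2 by rewrite (sub_cycle_eq sYa) order_a cardY.
  left; split=> //; apply: contra ntY => four_dv.
  have : a ^+ (n %/ 2) \in <[a ^+ (n %/ (n %/ 2))]>.
    by rewrite divn_divr // mem_cycleX ?order_a // dvdn_divRL.
  rewrite -(Bgrp_cycleI _ s) inE => /andP [zB _].
  have sYB : Y \subset Bgrp n a x (n %/ 2) s by rewrite defYA cycle_subG.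
  by rewrite -(setIidPr sYB) tiBY.
have yNB : y \notin Bgrp n a x (n %/ 2) s.
  apply: contra nty => yB; have : y \in Bgrp n a x (n %/ 2) s :&: Y.
    by rewrite inE yB.
  by rewrite tiBY inE.
have [i lt_in def_y] := refl_of_notin_cycle (subsetP sYG y yY) yNa.
right; exists i; split=> //; last by rewrite Bgrp1E defY def_y.
move: yNB; rewrite def_y mem_Bgrp_refl ?divn_divr ?dvdn_div // !modn2 oddb.
by case: (odd i); case: (s).
Qed.

End Dihedral.

Theorem mainTheorem5 (gT : finGroupType) (n : nat) (G : {group gT}) (a x : gT) :
  (3 <= n)%N -> is_dihedral_pres n G a x ->
  (* (1) *)
  (forall m r : nat, (m %| n)%N -> coprime m (n %/ m) -> (r < m)%N ->
     Agrp n a m ><| Bgrp n a x (n %/ m) r = G)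
  /\
  (* (2) *)
  (~~ odd n ->
     forall r0 r1 : nat, (r0 < n)%N -> (r1 < n)%N -> ~~ odd r0 -> odd r1 ->
       Bgrp n a x (n %/ 2) 0 ><| Bgrp n a x 1 r1 = G /\
       Bgrp n a x (n %/ 2) 1 ><| Bgrp n a x 1 r0 = G)
  /\
  (* (3) *)
  ((2 %| n)%N -> ~~ (4 %| n)%N ->
     Bgrp n a x (n %/ 2) 0 \x Agrp n a 2 = G /\
     Bgrp n a x (n %/ 2) 1 \x Agrp n a 2 = G)
  /\
  (* (4) *)
  (forall X Y : {group gT}, X ><| Y = G -> X :!=: 1 -> Y :!=: 1 ->
     (exists m r : nat, [/\ (m %| n)%N, coprime m (n %/ m), (r < m)%N,
                            X :=: Agrp n a m & Y :=: Bgrp n a x (n %/ m) r])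
     \/ (~~ odd n /\
         ((X :=: Bgrp n a x (n %/ 2) 0 /\
             exists r1, [/\ (r1 < n)%N, odd r1 & Y :=: Bgrp n a x 1 r1])
          \/ (X :=: Bgrp n a x (n %/ 2) 1 /\
             exists r0, [/\ (r0 < n)%N, ~~ odd r0 & Y :=: Bgrp n a x 1 r0])))
     \/ ([/\ (2 %| n)%N, ~~ (4 %| n)%N,
            X :=: Bgrp n a x (n %/ 2) 0 \/ X :=: Bgrp n a x (n %/ 2) 1
          & Y :=: Agrp n a 2])).
Proof.
move=> n_ge3 dihG; have n_gt0 : 0 < n by lia.
split; first by move=> m r m_dv cop _; apply: sdprod_Agrp_Bgrp.
split.
  move=> n_even r0 r1 _ _ r0_even r1_odd; split.
    by apply: (sdprod_Bgrp_refl n_gt0 dihG (s := false)); rewrite ?r1_odd.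
  by apply: (sdprod_Bgrp_refl n_gt0 dihG (s := true)); rewrite ?(negPf r0_even).
split; first by move=> two_dv n4; split; apply: dprod_Bgrp_Agrp.
move=> X Y defG _ ntY; case: (boolP (X \subset <[a]>)) => [sXa | nsXa].
  by left; apply: sdprod_cycle_kernel defG sXa.
have [n_even [s defX]] := sdprod_refl_kernel n_gt0 dihG defG ntY nsXa.
rewrite defX in defG; right.
have [[n4 defY] | [i [lt_in odd_i defY]]] :=
  sdprod_Bgrp_half_complement n_gt0 dihG n_even defG.
  right; split; rewrite ?dvdn2 //.
  by case: s defX {defG} => defX; [right | left].
left; split=> //; case: s defX odd_i {defG} => defX odd_i; [right | left].
  by split=> //; exists i; rewrite odd_i.
by split=> //; exists i; rewrite odd_i.
Qed.
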